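(* Let $\mathbb{S}=[0,1]$ with $0$ and $1$ identified, and let $H:\mathbb{S}\times\mathbb{R}\times\mathbb{R}\to\mathbb{R}$ be $C^\infty$ with $\frac{\partial^2H}{\partial p^2}>0$, $p\mapsto H(x,p,u)$ superlinear for each $(x,u)$, and $|\frac{\partial H}{\partial u}|\le\kappa$ for some $\kappa>0$. Let $u_0$ be a viscosity solution of $H(x,u'(x),u(x))=0$ on $\mathbb{S}$ such that $\frac{\partial H}{\partial p}(x,u_0'(x),u_0(x))\ne0$ at every differentiability point $x$ of $u_0$. Set $B(x)=\frac{\partial H}{\partial p}(x,u_0'(x),u_0(x))$, $$\mu=\frac{\int_0^1\frac{\partial H}{\partial u}(\tau,u_0'(\tau),u_0(\tau))B(\tau)^{-1}d\tau}{\int_0^1B(\tau)^{-1}d\tau},\qquad \rho(x)=\exp\left\{\int_0^x\frac{\mu-\frac{\partial H}{\partial u}(\tau,u_0'(\tau),u_0(\tau))}{B(\tau)}\,d\tau\right\}.$$ Assume $\mu<0$. For given $\Theta\in(\mu,0)$ set $w_\epsilon(x,t)=u_0(x)-\epsilon\rho(x)e^{-\Theta t}$. Then there exists $\tilde\epsilon_0=\tilde\epsilon_0(\Theta)>0$ such that: (1) for $\epsilon\in(0,\tilde\epsilon_0]$, $\partial_tw_\epsilon(x,t)+H(x,\partial_xw_\epsilon(x,t),w_\epsilon(x,t))\ge0$ for all $(x,t)\in\mathbb{S}\times\left[0,\frac{\ln\tilde\epsilon_0-\ln|\epsilon|}{-\Theta}\right]$; (2) for $\epsilon\in[-\tilde\epsilon_0,0)$,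 $\partial_tw_\epsilon(x,t)+H(x,\partial_xw_\epsilon(x,t),w_\epsilon(x,t))\le0$ for all $(x,t)\in\mathbb{S}\times\left[0,\frac{\ln\tilde\epsilon_0-\ln|\epsilon|}{-\Theta}\right]$.
   Context: It is known that under these assumptions $u_0$ is of class $C^\infty$, so $B$ is smooth and nowhere zero, $\rho$ is a smooth positive function on $\mathbb{S}$, and $w_\epsilon$ is $C^\infty$. *)

From Stdlib Require Import Reals Lra List.
From Coquelicot Require Import Coquelicot.
Open Scope R_scope.

(* The circle S = [0,1] with 0 ~ 1 is modelled by 1-periodic functions on R. *)
Definition periodic1 (f : R -> R) : Prop := forall x, f (x + 1) = f x.
Definition periodic1_3 (H : R -> R -> R -> R) : Prop :=
  forall x p u, H (x + 1) p u = H x p u.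

Definition pd (i : nat) (f : R -> R -> R -> R) : R -> R -> R -> R :=
  match i with
  | 0%nat => fun x p u => Derive (fun y => f y p u) x
  | 1%nat => fun x p u => Derive (fun q => f x q u) p
  | _ => fun x p u => Derive (fun v => f x p v) u
  end.

Definition ex_pd (i : nat) (f : R -> R -> R -> R) (x p u : R) : Prop :=
  match i with
  | 0%nat => ex_derive (fun y => f y p u) x
  | 1%nat => ex_derive (fun q => f x q u) p
  | _ => ex_derive (fun v => f x p v) u
  end.

(* Iterated partial derivative along a list of directions (0 = x, 1 = p, 2 = u). *)
Fixpoint dpart (l : list nat) (f : R -> R -> R -> R) : R -> R -> R -> R :=
  match l with
  | nil => f
  | i :: l' => pd i (dpart l' f)
  end.

Definition cont3 (f : R -> R -> R -> R) : Prop :=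
  forall x p u eps, 0 < eps -> exists delta, 0 < delta /\
    forall x' p' u', Rabs (x' - x) < delta -> Rabs (p' - p) < delta ->
      Rabs (u' - u) < delta -> Rabs (f x' p' u' - f x p u) < eps.

Definition smooth3 (f : R -> R -> R -> R) : Prop :=
  (forall l i x p u, (i < 3)%nat -> ex_pd i (dpart l f) x p u) /\
  (forall l, cont3 (dpart l f)).

Definition Hp (H : R -> R -> R -> R) := pd 1 H.
Definition Hu (H : R -> R -> R -> R) := pd 2 H.
Definition Hpp (H : R -> R -> R -> R) := pd 1 (pd 1 H).

Definition superlinear (H : R -> R -> R -> R) : Prop :=
  forall x u M, exists R0, forall p, R0 <= Rabs p -> M * Rabs p <= H x p u.

Definition C1 (phi : R -> R) : Prop :=
  (forall x, ex_derive phi x) /\ (forall x, continuous (Derive phi) x).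

Definition loc_max (f : R -> R) (x : R) : Prop :=
  exists r, 0 < r /\ forall y, Rabs (y - x) < r -> f y <= f x.
Definition loc_min (f : R -> R) (x : R) : Prop :=
  exists r, 0 < r /\ forall y, Rabs (y - x) < r -> f x <= f y.

Definition visc_sub (H : R -> R -> R -> R) (u : R -> R) : Prop :=
  forall phi x, C1 phi -> loc_max (fun y => u y - phi y) x ->
    H x (Derive phi x) (u x) <= 0.
Definition visc_super (H : R -> R -> R -> R) (u : R -> R) : Prop :=
  forall phi x, C1 phi -> loc_min (fun y => u y - phi y) x ->
    0 <= H x (Derive phi x) (u x).
Definition visc_sol (H : R -> R -> R -> R) (u : R -> R) : Prop :=
  periodic1 u /\ (forall x, continuous u x) /\ visc_sub H u /\ visc_super H u.

Definition Bf (H : R -> R -> R -> R) (u0 : R -> R) (x : R) : R :=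
  Hp H x (Derive u0 x) (u0 x).

Definition muf (H : R -> R -> R -> R) (u0 : R -> R) : R :=
  RInt (fun t => Hu H t (Derive u0 t) (u0 t) / Bf H u0 t) 0 1 /
  RInt (fun t => / Bf H u0 t) 0 1.

Definition rhof (H : R -> R -> R -> R) (u0 : R -> R) (x : R) : R :=
  exp (RInt (fun t => (muf H u0 - Hu H t (Derive u0 t) (u0 t)) / Bf H u0 t) 0 x).

Definition wf (H : R -> R -> R -> R) (u0 : R -> R) (Theta eps x t : R) : R :=
  u0 x - eps * rhof H u0 x * exp (- Theta * t).

From Pilot Require Import Defs.
From Stdlib Require Import Reals Lra Lia List Classical.
From Coquelicot Require Import Coquelicot.
Open Scope R_scope.

(* The core of the proof is that [u0] is C^1 and solves [H(x, u0', u0) = 0] classically.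
   Superlinearity makes [u0] locally Lipschitz, and testing with lines and parabolas
   shows that [u0] has one-sided derivatives everywhere, both roots of the strictly
   convex function [H(x, ., u0 x)]; the supersolution property excludes convex kinks.
   At a concave kink the right slope lies on the decreasing branch of [H(x, ., u0 x)]
   and the left slope on the increasing one. The decreasing branch is inherited by all
   points to the right, which after one period contradicts periodicity. Hence [u0] is
   differentiable, [B] has locally constant sign and [u0'] is continuous, so [rho] is
   C^1 with [rho' B = rho (mu - H_u)]. A first-order expansion of [H] then gives, with
   [delta = eps exp(-Theta t)],
     [d_t w + H(x, d_x w, w) = delta (rho (Theta - mu) + o(1))],
   whose sign is that of [eps] as long as [|delta| <= eps0]. *)

Lemma Rabs_le_bounds a b : Rabs a <= b -> - b <= a <= b.
Proof.
  intros Hab. pose proof (Rle_abs a). pose proof (Rle_abs (- a)).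
  rewrite Rabs_Ropp in *. lra.
Qed.

Definition cont_at (g : R -> R) (t : R) : Prop :=
  forall e, 0 < e -> exists d, 0 < d /\
    forall s, Rabs (s - t) < d -> Rabs (g s - g t) < e.

Lemma continuous_cont_at g t : continuous g t -> cont_at g t.
Proof.
  intros Hc e He.
  apply continuity_pt_filterlim in Hc.
  destruct (Hc e He) as [d [Hd Hd']].
  exists d; split; auto. intros s Hs.
  destruct (Req_dec s t) as [->|Hne].
  - rewrite Rminus_eq_0, Rabs_R0; auto.
  - apply Hd'. repeat split; auto.
Qed.

Lemma cont_at_continuity_pt g t : cont_at g t -> continuity_pt g t.
Proof.
  intros Hc e He. destruct (Hc e He) as [d [Hd Hd']].
  exists d; split; auto. intros s [_ Hs]. apply Hd'. exact Hs.
Qed.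

Lemma cont_at_neg g t : cont_at g t -> g t < 0 ->
  exists d, 0 < d /\ forall s, Rabs (s - t) < d -> g s < 0.
Proof.
  intros Hc Hn. destruct (Hc (- g t)) as [d [Hd Hd']]; [lra|]. exists d; split; auto.
  intros s Hs. pose proof (Rabs_def2 _ _ (Hd' s Hs)). lra.
Qed.

Lemma cont_at_same_sign g t s : cont_at g t -> g t * s > 0 ->
  exists d, 0 < d /\ forall z, Rabs (z - t) < d -> g z * s > 0.
Proof.
  intros Hc Hs.
  assert (Hg : 0 < Rabs (g t)) by (apply Rabs_pos_lt; intros E; rewrite E in Hs; lra).
  destruct (Hc _ Hg) as [d [Hd Hd']]. exists d; split; auto.
  intros z Hz. pose proof (Rabs_def2 _ _ (Hd' z Hz)).
  destruct (Rlt_or_le 0 (g t)).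
  - rewrite Rabs_right in * by lra. nra.
  - rewrite Rabs_left1 in * by lra. nra.
Qed.

Lemma cont_at_const c t : cont_at (fun _ => c) t.
Proof.
  intros e He. exists 1; split; [lra|]. intros s _. rewrite Rminus_eq_0, Rabs_R0; auto.
Qed.

Lemma cont_at_id t : cont_at (fun s => s) t.
Proof. intros e He. exists e; split; auto. Qed.

Lemma cont3_comp_cont_at f g1 g2 g3 t :
  cont3 f -> cont_at g1 t -> cont_at g2 t -> cont_at g3 t ->
  cont_at (fun s => f (g1 s) (g2 s) (g3 s)) t.
Proof.
  intros Hf H1 H2 H3 e He.
  destruct (Hf (g1 t) (g2 t) (g3 t) e He) as [d [Hd Hd']].
  destruct (H1 d Hd) as [d1 [Hd1 Hd1']].
  destruct (H2 d Hd) as [d2 [Hd2 Hd2']].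
  destruct (H3 d Hd) as [d3 [Hd3 Hd3']].
  exists (Rmin d1 (Rmin d2 d3)); split; [repeat apply Rmin_pos; auto|].
  intros s Hs.
  pose proof (Rmin_l d1 (Rmin d2 d3)). pose proof (Rmin_r d1 (Rmin d2 d3)).
  pose proof (Rmin_l d2 d3). pose proof (Rmin_r d2 d3).
  apply Hd'; [apply Hd1' | apply Hd2' | apply Hd3']; lra.
Qed.

Lemma cont3_oscillation f x p w eta : cont3 f -> 0 < eta -> exists d, 0 < d /\
  forall x1 p1 w1 x2 p2 w2, Rabs (x1 - x) < d -> Rabs (p1 - p) < d -> Rabs (w1 - w) < d ->
    Rabs (x2 - x) < d -> Rabs (p2 - p) < d -> Rabs (w2 - w) < d ->
    Rabs (f x1 p1 w1 - f x2 p2 w2) <= eta.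
Proof.
  intros Hf Heta. destruct (Hf x p w (eta / 2) ltac:(lra)) as [d [Hd Hd']].
  exists d; split; auto. intros.
  replace (f x1 p1 w1 - f x2 p2 w2) with ((f x1 p1 w1 - f x p w) - (f x2 p2 w2 - f x p w)) by ring.
  eapply Rle_trans; [apply Rabs_triang | rewrite Rabs_Ropp].
  pose proof (Hd' x1 p1 w1). pose proof (Hd' x2 p2 w2). lra.
Qed.

Lemma cont_at_bounded_on g lo hi : lo <= hi -> (forall t, cont_at g t) ->
  exists M, forall t, lo <= t <= hi -> Rabs (g t) <= M.
Proof.
  intros Hlh Hg.
  assert (Hc : forall t, lo <= t <= hi -> continuity_pt g t)
    by (intros t _; apply cont_at_continuity_pt, Hg).
  destruct (continuity_ab_maj g lo hi Hlh Hc) as [a [Ha _]].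
  destruct (continuity_ab_min g lo hi Hlh Hc) as [b [Hb _]].
  exists (Rmax (Rabs (g a)) (Rabs (g b))). intros t Ht.
  specialize (Ha t Ht). specialize (Hb t Ht).
  pose proof (Rmax_l (Rabs (g a)) (Rabs (g b))). pose proof (Rmax_r (Rabs (g a)) (Rabs (g b))).
  pose proof (Rle_abs (g a)). pose proof (Rle_abs (- g b)). rewrite Rabs_Ropp in *.
  apply Rabs_le. lra.
Qed.

Lemma uniform_on_interval (Q : R -> R -> Prop) lo hi : lo <= hi ->
  (forall k k' y, k <= k' -> Q k y -> Q k' y) ->
  (forall y, lo <= y <= hi ->
     exists k r, 0 < r /\ forall y', Rabs (y' - y) < r -> Q k y') ->
  exists k, forall y, lo <= y <= hi -> Q k y.
Proof.
  intros Hlh Hmono Hloc.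
  set (S := fun t => lo <= t <= hi /\ exists k, forall y, lo <= y <= t -> Q k y).
  assert (S0 : S lo).
  { split; [lra|]. destruct (Hloc lo) as [k [r [Hr Hk]]]; [lra|].
    exists k. intros y Hy. apply Hk. replace (y - lo) with 0 by lra. rewrite Rabs_R0; lra. }
  destruct (completeness S) as [s [Hub Hlub]].
  { exists hi. intros t [Ht _]. lra. }
  { exists lo; auto. }
  assert (Hs : lo <= s <= hi) by (split; [apply Hub, S0 | apply Hlub; intros t [Ht _]; lra]).
  destruct (Hloc s Hs) as [ks [r [Hr Hks]]].
  assert (Ht : exists t, S t /\ s - r < t).
  { apply NNPP. intros Hn.
    enough (s <= s - r) by lra.
    apply Hlub. intros t St. apply Rnot_lt_le. intros Hlt. apply Hn. exists t; auto. }
  destruct Ht as [t [[Ht [kt Hkt]] Hst]].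
  assert (Hts : t <= s) by (apply Hub; split; [lra | exists kt; auto]).
  set (t' := Rmin (s + r / 2) hi).
  assert (Ht' : t' <= s + r / 2) by apply Rmin_l.
  assert (Hk : forall y, lo <= y <= t' -> Q (Rmax kt ks) y).
  { intros y Hy. destruct (Rle_or_lt y t).
    - apply Hmono with kt; [apply Rmax_l | apply Hkt; lra].
    - apply Hmono with ks; [apply Rmax_r | apply Hks, Rabs_def1; lra]. }
  assert (Hhi : t' <= s).
  { apply Hub. split; [split; [apply Rmin_glb; lra | apply Rmin_r] |].
    exists (Rmax kt ks); exact Hk. }
  exists (Rmax kt ks). intros y Hy. apply Hk.
  unfold t' in *. revert Hhi. unfold Rmin. destruct (Rle_dec (s + r / 2) hi); lra.
Qed.

Lemma interior_loc_max f lo hi t :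
  (forall c, lo <= c <= hi -> continuity_pt f c) -> lo <= t <= hi ->
  f lo < f t -> f hi < f t -> exists z, lo < z < hi /\ loc_max f z.
Proof.
  intros Hc Ht H1 H2.
  destruct (continuity_ab_maj f lo hi) as [z [Hz [Hz1 Hz2]]]; [lra | auto |].
  assert (f t <= f z) by (apply Hz; lra).
  assert (Hlz : lo < z) by (destruct Hz1 as [|Heq]; [lra | subst; lra]).
  assert (Hzh : z < hi) by (destruct Hz2 as [|Heq]; [lra | subst; lra]).
  exists z; split; [lra|].
  exists (Rmin (z - lo) (hi - z)); split; [apply Rmin_pos; lra|].
  intros y Hy. apply Hz. apply Rabs_def2 in Hy.
  pose proof (Rmin_l (z - lo) (hi - z)). pose proof (Rmin_r (z - lo) (hi - z)). lra.
Qed.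

Lemma interior_loc_min f lo hi t :
  (forall c, lo <= c <= hi -> continuity_pt f c) -> lo <= t <= hi ->
  f t < f lo -> f t < f hi -> exists z, lo < z < hi /\ loc_min f z.
Proof.
  intros Hc Ht H1 H2.
  destruct (interior_loc_max (fun y => - f y) lo hi t) as [z [Hz [r [Hr Hmax]]]]; try lra.
  { intros c Hc'. apply continuity_pt_opp, Hc, Hc'. }
  exists z; split; auto. exists r; split; auto. intros y Hy. specialize (Hmax y Hy). lra.
Qed.

Lemma MVT_abs f df a b : (forall x, is_derive f x (df x)) ->
  exists c, Rabs (c - a) <= Rabs (b - a) /\ f b - f a = df c * (b - a).
Proof.
  intros Hf.
  destruct (MVT_gen f a b df) as [c [Hc E]].
  - intros x _. apply Hf.
  - intros x _. apply derivable_continuous_pt. exists (df x). apply is_derive_Reals, Hf.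
  - exists c. split; [| exact E].
    revert Hc. unfold Rmin, Rmax. destruct (Rle_dec a b); intros Hc; apply Rabs_le;
      [rewrite Rabs_right by lra | rewrite Rabs_left by lra]; lra.
Qed.

Definition parabola (k s c K : R) : R -> R :=
  fun t => k + s * (t - c) + K * ((t - c) * (t - c)).

Lemma is_derive_parabola k s c K t : is_derive (parabola k s c K) t (s + 2 * K * (t - c)).
Proof. unfold parabola. auto_derive; auto. ring. Qed.

Lemma Derive_parabola k s c K t : Derive (parabola k s c K) t = s + 2 * K * (t - c).
Proof. apply is_derive_unique, is_derive_parabola. Qed.

Lemma C1_parabola k s c K : Defs.C1 (parabola k s c K).
Proof.
  split.
  - intros x. eexists. apply is_derive_parabola.
  - intros x. apply (continuous_ext (fun t => s + 2 * K * (t - c))).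
    + intros t. symmetry. apply Derive_parabola.
    + apply continuity_pt_filterlim, derivable_continuous_pt. reg.
Qed.

Lemma continuity_pt_parabola k s c K t : continuity_pt (parabola k s c K) t.
Proof.
  apply derivable_continuous_pt. eexists. apply is_derive_Reals, is_derive_parabola.
Qed.

Lemma right_induction (P : R -> Prop) x0 x1 :
  (exists r, 0 < r /\ forall z, x0 < z < x0 + r -> P z) ->
  (forall t, x0 < t <= x1 -> (forall z, x0 < z < t -> P z) -> P t) ->
  (forall t, x0 < t < x1 -> P t -> exists r, 0 < r /\ forall z, t < z < t + r -> P z) ->
  forall z, x0 < z <= x1 -> P z.
Proof.
  intros [r0 [Hr0 Hstart]] Hclosed Hopen.
  set (S := fun y => x0 <= y <= x1 /\ forall z, x0 < z <= y -> P z).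
  intros z Hz.
  destruct (completeness S) as [s [Hub Hlub]].
  { exists x1. intros y [Hy _]. lra. }
  { exists x0. split; [lra | intros; lra]. }
  assert (Hs0 : x0 < s).
  { set (y := Rmin (x0 + r0 / 2) x1).
    assert (y <= x0 + r0 / 2) by apply Rmin_l.
    assert (x0 < y) by (apply Rmin_glb_lt; lra).
    enough (y <= s) by lra. apply Hub. split; [split; [lra | apply Rmin_r] |].
    intros z' Hz'. apply Hstart. lra. }
  assert (Hs1 : s <= x1) by (apply Hlub; intros y [Hy _]; lra).
  assert (Hbelow : forall z, x0 < z < s -> P z).
  { intros z' Hz'. apply NNPP. intros Hn. enough (s <= z') by lra.
    apply Hlub. intros y [Hy HPy]. apply Rnot_lt_le. intros Hlt. apply Hn, HPy. lra. }
  assert (Ps : P s) by (apply Hclosed; auto).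
  assert (Hupto : forall z, x0 < z <= s -> P z).
  { intros z' Hz'. destruct (Req_dec z' s) as [->|]; [auto | apply Hbelow; lra]. }
  destruct (Rle_lt_or_eq_dec s x1 Hs1) as [Hlt|Heq]; [| subst s; apply Hupto; lra].
  exfalso. destruct (Hopen s ltac:(lra) Ps) as [r [Hr Hr']].
  set (y := Rmin (s + r / 2) x1).
  assert (y <= s + r / 2) by apply Rmin_l.
  assert (s < y) by (apply Rmin_glb_lt; lra).
  enough (y <= s) by lra. apply Hub. split; [split; [lra | apply Rmin_r] |].
  intros z' Hz'. destruct (Rle_or_lt z' s); [apply Hupto; lra | apply Hr'; lra].
Qed.

(** * One-sided derivatives *)

Definition right_deriv (f : R -> R) (x a : R) : Prop :=
  forall e, 0 < e -> exists r, 0 < r /\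
    forall y, x < y < x + r -> Rabs (f y - f x - a * (y - x)) <= e * (y - x).

Definition left_deriv (f : R -> R) (x b : R) : Prop :=
  forall e, 0 < e -> exists r, 0 < r /\
    forall y, x - r < y < x -> Rabs (f y - f x - b * (y - x)) <= e * (x - y).

Definition reflect (f : R -> R) : R -> R := fun y => f (- y).

Lemma left_deriv_reflect f x b : left_deriv f x b <-> right_deriv (reflect f) (- x) (- b).
Proof.
  unfold reflect. split; intros Hd e He; destruct (Hd e He) as [r [Hr Hr']];
    exists r; split; auto; intros y Hy.
  - specialize (Hr' (- y) ltac:(lra)). rewrite Ropp_involutive.
    replace (- b * (y - - x)) with (b * (- y - x)) by ring. lra.
  - specialize (Hr' (- y) ltac:(lra)). rewrite !Ropp_involutive in Hr'.
    replace (- b * (- y - - x)) with (b * (y - x)) in Hr' by ring. lra.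
Qed.

Lemma right_deriv_opp f x a : right_deriv f x a -> right_deriv (fun y => - f y) x (- a).
Proof.
  intros Hd e He. destruct (Hd e He) as [r [Hr Hr']]. exists r; split; auto.
  intros y Hy. rewrite <- Rabs_Ropp.
  replace (- (- f y - - f x - - a * (y - x))) with (f y - f x - a * (y - x)) by ring. auto.
Qed.

Lemma right_deriv_unique f x a a' : right_deriv f x a -> right_deriv f x a' -> a = a'.
Proof.
  intros H1 H2. apply NNPP. intros Hne.
  assert (He : 0 < Rabs (a - a') / 4) by (pose proof (Rabs_pos_lt (a - a')); lra).
  destruct (H1 _ He) as [r1 [Hr1 Hr1']]. destruct (H2 _ He) as [r2 [Hr2 Hr2']].
  set (y := x + Rmin r1 r2 / 2).
  assert (0 < Rmin r1 r2) by (apply Rmin_pos; auto).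
  pose proof (Rmin_l r1 r2). pose proof (Rmin_r r1 r2).
  specialize (Hr1' y ltac:(unfold y; lra)). specialize (Hr2' y ltac:(unfold y; lra)).
  assert (K : Rabs ((a - a') * (y - x)) <= Rabs (a - a') / 2 * (y - x)).
  { replace ((a - a') * (y - x))
      with ((f y - f x - a' * (y - x)) - (f y - f x - a * (y - x))) by ring.
    eapply Rle_trans; [apply Rabs_triang | rewrite Rabs_Ropp; lra]. }
  rewrite Rabs_mult, (Rabs_right (y - x)) in K by (unfold y; lra).
  assert (0 < y - x) by (unfold y; lra). nra.
Qed.

Lemma left_deriv_unique f x b b' : left_deriv f x b -> left_deriv f x b' -> b = b'.
Proof.
  rewrite !left_deriv_reflect. intros H1 H2.
  apply Ropp_eq_reg, (right_deriv_unique _ _ _ _ H1 H2).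
Qed.

Lemma right_left_deriv_is_derive f x a : right_deriv f x a -> left_deriv f x a -> is_derive f x a.
Proof.
  intros Hr Hl. apply is_derive_Reals. intros eps Heps.
  destruct (Hr (eps / 2) ltac:(lra)) as [r1 [Hr1 Hr1']].
  destruct (Hl (eps / 2) ltac:(lra)) as [r2 [Hr2 Hr2']].
  assert (K0 : 0 < Rmin r1 r2) by (apply Rmin_pos; auto).
  exists (mkposreal _ K0). intros h Hh Hhd. simpl in Hhd.
  pose proof (Rmin_l r1 r2). pose proof (Rmin_r r1 r2). apply Rabs_def2 in Hhd.
  replace ((f (x + h) - f x) / h - a) with ((f (x + h) - f x - a * (x + h - x)) / h)
    by (field; auto).
  unfold Rdiv. rewrite Rabs_mult, Rabs_inv.
  destruct (Rtotal_order h 0) as [Hn|[Hz|Hp]]; [| contradiction |].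
  - specialize (Hr2' (x + h) ltac:(lra)). rewrite (Rabs_left h) by lra.
    apply Rmult_lt_reg_r with (- h); [lra|]. rewrite Rmult_assoc, Rinv_l by lra. nra.
  - specialize (Hr1' (x + h) ltac:(lra)). rewrite (Rabs_right h) by lra.
    apply Rmult_lt_reg_r with h; [lra|]. rewrite Rmult_assoc, Rinv_l by lra. nra.
Qed.

Lemma right_deriv_shift1 f x a : (forall y, f (y + 1) = f y) ->
  right_deriv f x a -> right_deriv f (x + 1) a.
Proof.
  intros Hf Hd e He. destruct (Hd e He) as [r [Hr Hr']]. exists r; split; auto.
  intros y Hy. specialize (Hr' (y - 1) ltac:(lra)).
  replace y with (y - 1 + 1) at 1 by ring. rewrite !Hf.
  replace (y - (x + 1)) with (y - 1 - x) by ring. exact Hr'.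
Qed.

Lemma left_deriv_shift1 f x b : (forall y, f (y + 1) = f y) ->
  left_deriv f x b -> left_deriv f (x + 1) b.
Proof.
  intros Hf Hd e He. destruct (Hd e He) as [r [Hr Hr']]. exists r; split; auto.
  intros y Hy. specialize (Hr' (y - 1) ltac:(lra)).
  replace y with (y - 1 + 1) at 1 by ring. rewrite !Hf.
  replace (y - (x + 1)) with (y - 1 - x) by ring.
  replace (x + 1 - y) with (x - (y - 1)) by ring. exact Hr'.
Qed.

Lemma right_deriv_above f x a m : right_deriv f x a -> m < a ->
  forall r, 0 < r -> exists y, x < y < x + r /\ f x - m * x < f y - m * y.
Proof.
  intros Hd Hm r Hr0. destruct (Hd ((a - m) / 2) ltac:(lra)) as [r' [Hr' Hr'']].
  set (y := x + Rmin r r' / 2).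
  assert (0 < Rmin r r') by (apply Rmin_pos; auto).
  pose proof (Rmin_l r r'). pose proof (Rmin_r r r').
  exists y; split; [unfold y; lra|].
  specialize (Hr'' y ltac:(unfold y; lra)). apply Rabs_le_bounds in Hr''.
  assert (0 < y - x) by (unfold y; lra). nra.
Qed.

Lemma right_deriv_below f x a m : right_deriv f x a -> a < m ->
  forall r, 0 < r -> exists y, x < y < x + r /\ f y - m * y < f x - m * x.
Proof.
  intros Hd Hm r Hr.
  destruct (right_deriv_above _ x (- a) (- m) (right_deriv_opp _ _ _ Hd) ltac:(lra) r Hr)
    as [y [Hy Hv]].
  exists y; split; [auto | lra].
Qed.

Lemma left_deriv_above f x b m : left_deriv f x b -> m < b ->
  forall r, 0 < r -> exists y, x - r < y < x /\ f y - m * y < f x - m * x.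
Proof.
  rewrite left_deriv_reflect. intros Hd Hm r Hr.
  destruct (right_deriv_below _ _ _ (- m) Hd ltac:(lra) r Hr) as [y [Hy Hv]].
  unfold reflect in Hv. rewrite Ropp_involutive in Hv.
  exists (- y); split; [lra | nra].
Qed.

Lemma left_deriv_below f x b m : left_deriv f x b -> b < m ->
  forall r, 0 < r -> exists y, x - r < y < x /\ f x - m * x < f y - m * y.
Proof.
  rewrite left_deriv_reflect. intros Hd Hm r Hr.
  destruct (right_deriv_above _ _ _ (- m) Hd ltac:(lra) r Hr) as [y [Hy Hv]].
  unfold reflect in Hv. rewrite Ropp_involutive in Hv.
  exists (- y); split; [lra | nra].
Qed.

Lemma right_deriv_affine_approx f x a : right_deriv f x a ->
  forall d eta, 0 < d -> 0 < eta -> exists h, 0 < h < d /\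
    forall t, x <= t <= x + 2 * h -> Rabs (f t - f (x + h) - a * (t - (x + h))) <= eta * h.
Proof.
  intros Hd d eta Hd0 Heta.
  destruct (Hd (eta / 3) ltac:(lra)) as [r [Hr Hr']].
  set (h := Rmin (r / 4) (d / 2)).
  assert (0 < h) by (apply Rmin_pos; lra).
  assert (h <= r / 4) by apply Rmin_l. assert (h <= d / 2) by apply Rmin_r.
  exists h; split; [lra|]. intros t Ht.
  pose proof (Hr' (x + h) ltac:(lra)) as Bh.
  replace (f t - f (x + h) - a * (t - (x + h)))
    with ((f t - f x - a * (t - x)) - (f (x + h) - f x - a * (x + h - x))) by ring.
  eapply Rle_trans; [apply Rabs_triang | rewrite Rabs_Ropp].
  replace (x + h - x) with h in * by ring.
  destruct (Req_dec t x) as [->|Htx].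
  - replace (f x - f x - a * (x - x)) with 0 by ring. rewrite Rabs_R0. nra.
  - pose proof (Hr' t ltac:(lra)). nra.
Qed.

Lemma left_deriv_affine_approx f x b : left_deriv f x b ->
  forall d eta, 0 < d -> 0 < eta -> exists h, 0 < h < d /\
    forall t, x - 2 * h <= t <= x -> Rabs (f t - f (x - h) - b * (t - (x - h))) <= eta * h.
Proof.
  rewrite left_deriv_reflect. intros Hd d eta Hd0 Heta.
  destruct (right_deriv_affine_approx _ _ _ Hd d eta Hd0 Heta) as [h [Hh Happ]].
  exists h; split; auto. intros t Ht.
  specialize (Happ (- t) ltac:(lra)). unfold reflect in Happ.
  rewrite Ropp_involutive in Happ. replace (- (- x + h)) with (x - h) in Happ by ring.
  replace (b * (t - (x - h))) with (- b * (- t - (- x + h))) by ring. exact Happ.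
Qed.

Definition oscillates_right (f : R -> R) (x q : R) : Prop :=
  forall r, 0 < r ->
    (exists y, x < y < x + r /\ 0 < f y - f x - q * (y - x)) /\
    (exists y, x < y < x + r /\ f y - f x - q * (y - x) < 0).

Definition oscillates_left (f : R -> R) (x q : R) : Prop :=
  forall r, 0 < r ->
    (exists y, x - r < y < x /\ 0 < f y - f x - q * (y - x)) /\
    (exists y, x - r < y < x /\ f y - f x - q * (y - x) < 0).

Lemma oscillates_left_reflect f x q :
  oscillates_right (reflect f) (- x) (- q) -> oscillates_left f x q.
Proof.
  unfold reflect. intros Ho r Hr.
  destruct (Ho r Hr) as [[y1 [Hy1 V1]] [y2 [Hy2 V2]]].
  rewrite Ropp_involutive in V1, V2.
  split; [exists (- y1) | exists (- y2)]; split; try lra;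
    rewrite Ropp_involutive; nra.
Qed.

(* The right derivative is the supremum of the slopes of the lines staying below the
   graph to the right of [x]; non-oscillation makes it an upper slope too. *)
Lemma right_deriv_exists f x L r0 : 0 < r0 ->
  (forall y, x < y < x + r0 -> Rabs (f y - f x) <= L * (y - x)) ->
  (forall a e, 0 < e -> ~ (forall q, a < q < a + e -> oscillates_right f x q)) ->
  exists a, right_deriv f x a.
Proof.
  intros Hr0 Hlip Hosc.
  set (A := fun p => exists r, 0 < r /\ forall y, x < y < x + r -> p * (y - x) <= f y - f x).
  assert (HA : forall p, A p -> p <= L).
  { intros p [r [Hr Hp]]. set (y := x + Rmin r r0 / 2).
    assert (0 < Rmin r r0) by (apply Rmin_pos; lra).
    pose proof (Rmin_l r r0). pose proof (Rmin_r r r0).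
    specialize (Hp y ltac:(unfold y; lra)).
    pose proof (Rabs_le_bounds _ _ (Hlip y ltac:(unfold y; lra))).
    assert (0 < y - x) by (unfold y; lra). nra. }
  destruct (completeness A) as [a [Hub Hlub]].
  { exists L. exact HA. }
  { exists (- L), r0. split; auto. intros y Hy.
    pose proof (Rabs_le_bounds _ _ (Hlip y Hy)). lra. }
  exists a. intros e He.
  assert (Hlow : exists p r, a - e < p /\ 0 < r /\
                   forall y, x < y < x + r -> p * (y - x) <= f y - f x).
  { apply NNPP. intros Hn. enough (a <= a - e) by lra.
    apply Hlub. intros p [r [Hr Hp]]. apply Rnot_lt_le. intros Hlt.
    apply Hn. exists p, r. auto. }
  destruct Hlow as [p [r1 [Hp [Hr1 Hr1']]]].
  assert (Hup : exists r, 0 < r /\ forall y, x < y < x + r -> f y - f x <= (a + e) * (y - x)).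
  { apply NNPP. intros Hn. apply (Hosc a e He). intros q Hq r Hr. split.
    - apply NNPP. intros Hn2. apply Hn. exists r; split; auto.
      intros y Hy. apply Rnot_lt_le. intros Hgt.
      apply Hn2. exists y. split; [auto | nra].
    - apply NNPP. intros Hn2. enough (q <= a) by lra. apply Hub.
      exists r; split; auto. intros y Hy. apply Rnot_lt_le. intros Hgt.
      apply Hn2. exists y. split; [auto | lra]. }
  destruct Hup as [r2 [Hr2 Hr2']].
  exists (Rmin r1 r2); split; [apply Rmin_pos; auto|].
  intros y Hy. pose proof (Rmin_l r1 r2). pose proof (Rmin_r r1 r2).
  specialize (Hr1' y ltac:(lra)). specialize (Hr2' y ltac:(lra)).
  apply Rabs_le. split; nra.
Qed.

Lemma left_deriv_exists f x L r0 : 0 < r0 ->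
  (forall y, x - r0 < y < x -> Rabs (f y - f x) <= L * (x - y)) ->
  (forall b e, 0 < e -> ~ (forall q, b < q < b + e -> oscillates_left f x q)) ->
  exists b, left_deriv f x b.
Proof.
  intros Hr0 Hlip Hosc.
  destruct (right_deriv_exists (reflect f) (- x) L r0 Hr0) as [a Ha].
  - intros y Hy. unfold reflect. rewrite Ropp_involutive.
    replace (y - - x) with (x - - y) by ring. apply Hlip. lra.
  - intros a e He Hall. apply (Hosc (- a - e) e He). intros q Hq.
    apply oscillates_left_reflect, Hall. lra.
  - exists (- a). apply left_deriv_reflect. rewrite Ropp_involutive. exact Ha.
Qed.

(** * Strictly convex functions *)

Section StrictConvexity.

Context {f f' : R -> R}.
Hypothesis f_deriv : forall p, is_derive f p (f' p).
Hypothesis f'_incr : forall p q, p < q -> f' p < f' q.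

Lemma convex_MVT p q : p < q -> exists c, p < c < q /\ f q - f p = f' c * (q - p).
Proof.
  intros Hpq. destruct (MVT_cor2 f f' p q Hpq) as [c [Hc Hc']].
  - intros c _. apply is_derive_Reals, f_deriv.
  - exists c; auto.
Qed.

Lemma convex_lt_max a b t : a < t < b -> f t < Rmax (f a) (f b).
Proof.
  intros Ht.
  destruct (convex_MVT a t) as [c1 [Hc1 E1]]; [lra|].
  destruct (convex_MVT t b) as [c2 [Hc2 E2]]; [lra|].
  pose proof (f'_incr c1 c2 ltac:(lra)).
  pose proof (Rmax_l (f a) (f b)). pose proof (Rmax_r (f a) (f b)).
  apply Rnot_le_lt. intros Hge.
  destruct (Rlt_or_le (f' c1) 0); destruct (Rlt_or_le 0 (f' c2)); nra.
Qed.

Lemma convex_le_max a b t : a <= t <= b -> f t <= Rmax (f a) (f b).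
Proof.
  intros Ht.
  destruct (Req_dec t a) as [->|]; [apply Rmax_l|].
  destruct (Req_dec t b) as [->|]; [apply Rmax_r|].
  left. apply convex_lt_max. lra.
Qed.

Lemma convex_no_zero_interval a e : 0 < e -> ~ (forall p, a < p < a + e -> f p = 0).
Proof.
  intros He Hz.
  pose proof (convex_lt_max (a + e / 4) (a + 3 * e / 4) (a + e / 2) ltac:(lra)) as K.
  rewrite (Hz (a + e / 4)), (Hz (a + e / 2)), (Hz (a + 3 * e / 4)), Rmax_left in K; lra.
Qed.

Lemma convex_two_roots a b : f a = 0 -> f b = 0 -> a < b -> f' a < 0 /\ 0 < f' b.
Proof.
  intros Ha Hb Hab. destruct (convex_MVT a b Hab) as [c [Hc E]].
  rewrite Ha, Hb, Rminus_0_r in E.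
  assert (f' c = 0) by (destruct (Rmult_integral _ _ (eq_sym E)); lra).
  pose proof (f'_incr a c ltac:(lra)). pose proof (f'_incr c b ltac:(lra)). lra.
Qed.

Lemma convex_root_below_neg q m : f q = 0 -> f m < 0 -> q <= m -> f' q < 0.
Proof.
  intros Hq Hm Hqm. destruct (Req_dec q m) as [->|Hne]; [lra|].
  destruct (convex_MVT q m ltac:(lra)) as [c [Hc E]].
  pose proof (f'_incr q c ltac:(lra)).
  destruct (Rlt_or_le (f' c) 0); nra.
Qed.

Lemma convex_root_above_neg q m : f q = 0 -> f m < 0 -> m <= q -> 0 < f' q.
Proof.
  intros Hq Hm Hqm. destruct (Req_dec q m) as [->|Hne]; [lra|].
  destruct (convex_MVT m q ltac:(lra)) as [c [Hc E]].
  pose proof (f'_incr c q ltac:(lra)).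
  destruct (Rlt_or_le 0 (f' c)); nra.
Qed.

Lemma convex_increase_persists a b p : a < b <= p -> f a < f b -> f b <= f p.
Proof.
  intros Hp Hab. destruct (Req_dec b p) as [<-|Hne]; [lra|].
  pose proof (convex_lt_max a p b ltac:(lra)) as K.
  unfold Rmax in K. destruct (Rle_dec (f a) (f p)); lra.
Qed.

Lemma convex_decrease_persists a b p : p <= b < a -> f a < f b -> f b <= f p.
Proof.
  intros Hp Hab. destruct (Req_dec b p) as [<-|Hne]; [lra|].
  pose proof (convex_lt_max p a b ltac:(lra)) as K.
  unfold Rmax in K. destruct (Rle_dec (f p) (f a)); lra.
Qed.

Lemma convex_root_sign_change p : f p = 0 -> f' p <> 0 -> forall e, 0 < e ->
  exists e', 0 < e' <= e /\ f (p + e') * f' p > 0 /\ f (p - e') * f' p < 0.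
Proof.
  intros Hp Hnz e He.
  pose proof (proj1 (is_derive_Reals f p (f' p)) (f_deriv p)) as Hd.
  destruct (Hd (Rabs (f' p) / 2)) as [d Hd']; [apply Rabs_pos_lt in Hnz; lra|].
  set (e' := Rmin e (d / 2)).
  assert (0 < e') by (apply Rmin_pos; [lra | destruct d; simpl; lra]).
  assert (e' <= e) by apply Rmin_l. assert (e' <= d / 2) by apply Rmin_r.
  assert (Hq : forall h, 0 < Rabs h <= e' -> (f (p + h) / h) * f' p > 0).
  { intros h Hh. assert (h <> 0) by (intros ->; rewrite Rabs_R0 in Hh; lra).
    specialize (Hd' h ltac:(auto) ltac:(lra)). rewrite Hp, Rminus_0_r in Hd'.
    apply Rabs_def2 in Hd'.
    destruct (Rlt_or_le 0 (f' p)).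
    - rewrite Rabs_right in Hd' by lra. nra.
    - rewrite Rabs_left in Hd' by lra. nra. }
  exists e'. repeat split; [lra | lra | |].
  - specialize (Hq e' ltac:(rewrite Rabs_right; lra)).
    replace (f (p + e') * f' p) with (e' * (f (p + e') / e' * f' p)) by (field; lra). nra.
  - specialize (Hq (- e') ltac:(rewrite Rabs_Ropp, Rabs_right; lra)).
    replace (p - e') with (p + - e') by ring.
    replace (f (p + - e') * f' p) with (- e' * (f (p + - e') / - e' * f' p)) by (field; lra).
    nra.
Qed.

Lemma convex_root_between p e q s : 0 < e -> f (p + e) * s > 0 -> f (p - e) * s < 0 ->
  f q = 0 -> f' q * s > 0 -> p - e < q < p + e.
Proof.
  intros He Hr Hl Hq Hq'.
  destruct (Rtotal_order s 0) as [Hs|[->|Hs]]; [| lra |].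
  - assert (f (p + e) < 0 < f (p - e)) as [Hr' Hl'] by (split; nra).
    split; apply Rnot_le_lt; intros Hle.
    + pose proof (convex_le_max q (p + e) (p - e) ltac:(lra)). unfold Rmax in *.
      destruct (Rle_dec (f q) (f (p + e))); lra.
    + pose proof (convex_root_above_neg q (p + e) Hq Hr' Hle). nra.
  - assert (f (p - e) < 0 < f (p + e)) as [Hl' Hr'] by (split; nra).
    split; apply Rnot_le_lt; intros Hle.
    + pose proof (convex_root_below_neg q (p - e) Hq Hl' Hle). nra.
    + pose proof (convex_le_max (p - e) q (p + e) ltac:(lra)). unfold Rmax in *.
      destruct (Rle_dec (f (p - e)) (f q)); lra.
Qed.

End StrictConvexity.

(** * Regularity of the viscosity solution *)

Section ViscositySolution.

Variable H : R -> R -> R -> R.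
Variable u : R -> R.
Hypothesis H_smooth : smooth3 H.
Hypothesis H_periodic : periodic1_3 H.
Hypothesis H_convex : forall x p w, 0 < Hpp H x p w.
Hypothesis H_superlinear : superlinear H.
Hypothesis u_solution : visc_sol H u.
Hypothesis B_nonzero : forall x, ex_derive u x -> Hp H x (Derive u x) (u x) <> 0.

Lemma H_deriv_p x w p : is_derive (fun q => H x q w) p (Hp H x p w).
Proof. apply Derive_correct. exact (proj1 H_smooth nil 1%nat x p w ltac:(lia)). Qed.

Lemma Hp_deriv_p x w p : is_derive (fun q => Hp H x q w) p (Hpp H x p w).
Proof. apply Derive_correct. exact (proj1 H_smooth (1%nat :: nil) 1%nat x p w ltac:(lia)). Qed.

Lemma H_deriv_u x p w : is_derive (fun v => H x p v) w (Hu H x p w).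
Proof. apply Derive_correct. exact (proj1 H_smooth nil 2%nat x p w ltac:(lia)). Qed.

Lemma H_cont3 : cont3 H.
Proof. exact (proj2 H_smooth nil). Qed.

Lemma Hp_cont3 : cont3 (Hp H).
Proof. exact (proj2 H_smooth (1%nat :: nil)). Qed.

Lemma Hu_cont3 : cont3 (Hu H).
Proof. exact (proj2 H_smooth (2%nat :: nil)). Qed.

Lemma Hp_incr x w p q : p < q -> Hp H x p w < Hp H x q w.
Proof.
  intros Hpq.
  destruct (MVT_cor2 (fun q => Hp H x q w) (fun q => Hpp H x q w) p q Hpq) as [c [Hc _]].
  - intros c _. apply is_derive_Reals, Hp_deriv_p.
  - pose proof (H_convex x c w). nra.
Qed.

Lemma Hp_periodic x p w : Hp H (x + 1) p w = Hp H x p w.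
Proof. apply Derive_ext. intros q. apply H_periodic. Qed.

Lemma u_periodic y : u (y + 1) = u y.
Proof. exact (proj1 u_solution y). Qed.

Lemma u_cont_at t : cont_at u t.
Proof. apply continuous_cont_at, (proj1 (proj2 u_solution)). Qed.

Lemma H_along_u_cont_at q t : cont_at (fun s => H s q (u s)) t.
Proof.
  apply (cont3_comp_cont_at H (fun s => s) (fun _ => q) u);
    auto using H_cont3, cont_at_id, cont_at_const, u_cont_at.
Qed.

Lemma visc_sub_parabola k s c K z : loc_max (fun y => u y - parabola k s c K y) z ->
  H z (s + 2 * K * (z - c)) (u z) <= 0.
Proof.
  intros Hm. rewrite <- Derive_parabola with (k := k).
  apply (proj1 (proj2 (proj2 u_solution))); [apply C1_parabola | exact Hm].
Qed.

Lemma visc_super_parabola k s c K z : loc_min (fun y => u y - parabola k s c K y) z ->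
  0 <= H z (s + 2 * K * (z - c)) (u z).
Proof.
  intros Hm. rewrite <- Derive_parabola with (k := k).
  apply (proj2 (proj2 (proj2 u_solution))); [apply C1_parabola | exact Hm].
Qed.

Lemma u_minus_parabola_continuity_pt k s c K t :
  continuity_pt (fun y => u y - parabola k s c K y) t.
Proof.
  apply continuity_pt_minus;
    [apply cont_at_continuity_pt, u_cont_at | apply continuity_pt_parabola].
Qed.

Lemma H_le0_closed x a :
  (forall d, 0 < d -> exists z q, Rabs (z - x) < d /\ Rabs (q - a) < d /\ H z q (u z) <= 0) ->
  H x a (u x) <= 0.
Proof.
  intros Hap. apply Rnot_lt_le. intros Hpos.
  destruct (H_cont3 x a (u x) _ Hpos) as [d1 [Hd1 Hd1']].
  destruct (u_cont_at x d1 Hd1) as [d2 [Hd2 Hd2']].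
  destruct (Hap (Rmin d1 d2)) as [z [q [Hz [Hq Hh]]]]; [apply Rmin_pos; auto|].
  pose proof (Rmin_l d1 d2). pose proof (Rmin_r d1 d2).
  pose proof (Rabs_def2 _ _ (Hd1' z q (u z) ltac:(lra) ltac:(lra) (Hd2' z ltac:(lra)))).
  lra.
Qed.

Lemma H_ge0_closed x a :
  (forall d, 0 < d -> exists z q, Rabs (z - x) < d /\ Rabs (q - a) < d /\ 0 <= H z q (u z)) ->
  0 <= H x a (u x).
Proof.
  intros Hap. apply Rnot_lt_le. intros Hneg.
  destruct (H_cont3 x a (u x) (- H x a (u x))) as [d1 [Hd1 Hd1']]; [lra|].
  destruct (u_cont_at x d1 Hd1) as [d2 [Hd2 Hd2']].
  destruct (Hap (Rmin d1 d2)) as [z [q [Hz [Hq Hh]]]]; [apply Rmin_pos; auto|].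
  pose proof (Rmin_l d1 d2). pose proof (Rmin_r d1 d2).
  pose proof (Rabs_def2 _ _ (Hd1' z q (u z) ltac:(lra) ltac:(lra) (Hd2' z ltac:(lra)))).
  lra.
Qed.

Lemma H_coercive_near z0 : exists k r, 0 < r /\
  forall z, Rabs (z - z0) < r -> forall p, k <= Rabs p -> 0 < H z p (u z).
Proof.
  destruct (H_superlinear z0 (u z0) 1) as [R0 HR0].
  set (k := Rmax R0 (Rabs (H z0 0 (u z0)) + 1)).
  assert (Hk1 : R0 <= k) by apply Rmax_l.
  assert (Hk2 : Rabs (H z0 0 (u z0)) + 1 <= k) by apply Rmax_r.
  pose proof (Rle_abs (H z0 0 (u z0))). pose proof (Rabs_pos (H z0 0 (u z0))).
  assert (Hpk : k <= H z0 k (u z0)).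
  { pose proof (HR0 k). rewrite Rabs_right in * by lra. lra. }
  assert (Hmk : k <= H z0 (- k) (u z0)).
  { pose proof (HR0 (- k)). rewrite Rabs_Ropp, Rabs_right in * by lra. lra. }
  destruct (H_along_u_cont_at k z0 (1 / 2) ltac:(lra)) as [d1 [Hd1 Hd1']].
  destruct (H_along_u_cont_at (- k) z0 (1 / 2) ltac:(lra)) as [d2 [Hd2 Hd2']].
  destruct (H_along_u_cont_at 0 z0 (1 / 2) ltac:(lra)) as [d3 [Hd3 Hd3']].
  exists k, (Rmin d1 (Rmin d2 d3)). split; [repeat apply Rmin_pos; auto|].
  intros z Hz p Hp.
  pose proof (Rmin_l d1 (Rmin d2 d3)). pose proof (Rmin_r d1 (Rmin d2 d3)).
  pose proof (Rmin_l d2 d3). pose proof (Rmin_r d2 d3).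
  pose proof (Rabs_def2 _ _ (Hd1' z ltac:(lra))).
  pose proof (Rabs_def2 _ _ (Hd2' z ltac:(lra))).
  pose proof (Rabs_def2 _ _ (Hd3' z ltac:(lra))).
  destruct (Rle_or_lt 0 p).
  - rewrite Rabs_right in Hp by lra.
    pose proof (convex_increase_persists (H_deriv_p z (u z)) (Hp_incr z (u z)) 0 k p
                  ltac:(lra) ltac:(lra)).
    lra.
  - rewrite Rabs_left in Hp by lra.
    pose proof (convex_decrease_persists (H_deriv_p z (u z)) (Hp_incr z (u z)) 0 (- k) p
                  ltac:(lra) ltac:(lra)).
    lra.
Qed.

Lemma H_coercive_on lo hi : lo <= hi -> exists k,
  forall z, lo <= z <= hi -> forall p, k <= Rabs p -> 0 < H z p (u z).
Proof.
  intros Hlh. apply uniform_on_interval; auto.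
  - intros k k' z Hk Hq p Hp. apply Hq. lra.
  - intros z _. apply H_coercive_near.
Qed.

(* Coercivity forbids interior maxima of u minus a line of large slope, which would
   arise from a difference quotient of u exceeding that slope. *)
Lemma u_loc_lipschitz x : exists L, forall a b, x - 1/2 <= a <= b -> b <= x + 1/2 ->
  Rabs (u b - u a) <= L * (b - a).
Proof.
  destruct (H_coercive_on (x - 3) (x + 3)) as [k Hk]; [lra|].
  destruct (cont_at_bounded_on u (x - 3) (x + 3)) as [M HM]; [lra | apply u_cont_at |].
  assert (HM0 : 0 <= M) by (pose proof (HM x ltac:(lra)); pose proof (Rabs_pos (u x)); lra).
  set (L := Rabs k + 4 * M + 1).
  assert (HkL : k <= L) by (pose proof (Rle_abs k); unfold L; lra).
  assert (HML : 4 * M + 1 <= L) by (pose proof (Rabs_pos k); unfold L; lra).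
  exists L. intros a b Hab Hb. apply Rnot_lt_le. intros Hgt.
  assert (Hlt : a < b).
  { destruct (Req_dec a b) as [<-|]; [| lra].
    rewrite !Rminus_eq_0, Rabs_R0 in Hgt. lra. }
  pose proof (Rabs_le_bounds _ _ (HM a ltac:(lra))).
  pose proof (Rabs_le_bounds _ _ (HM b ltac:(lra))).
  pose proof (Rabs_le_bounds _ _ (HM (a + 2) ltac:(lra))).
  pose proof (Rabs_le_bounds _ _ (HM (b - 2) ltac:(lra))).
  assert (L <= L * (a + 2 - b)) by nra.
  assert (L <= L * (a - (b - 2))) by nra.
  destruct (Rle_or_lt 0 (u b - u a)) as [Hs|Hs].
  - rewrite Rabs_right in Hgt by lra.
    destruct (interior_loc_max (fun y => u y - parabola 0 L 0 0 y) a (a + 2) b)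
      as [z [Hz Hmax]]; try (unfold parabola; lra).
    { intros c _. apply u_minus_parabola_continuity_pt. }
    apply visc_sub_parabola in Hmax.
    replace (L + 2 * 0 * (z - 0)) with L in Hmax by ring.
    pose proof (Hk z ltac:(lra) L ltac:(rewrite Rabs_right; lra)). lra.
  - rewrite Rabs_left in Hgt by lra.
    destruct (interior_loc_max (fun y => u y - parabola 0 (- L) 0 0 y) (b - 2) b a)
      as [z [Hz Hmax]]; try (unfold parabola; lra).
    { intros c _. apply u_minus_parabola_continuity_pt. }
    apply visc_sub_parabola in Hmax.
    replace (- L + 2 * 0 * (z - 0)) with (- L) in Hmax by ring.
    pose proof (Hk z ltac:(lra) (- L) ltac:(rewrite Rabs_Ropp, Rabs_right; lra)). lra.
Qed.

Lemma H_le0_of_peaks x q :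
  (forall d, 0 < d -> exists t1 t2 t3, x - d < t1 < t2 /\ t2 < t3 < x + d /\
     u t1 - q * t1 < u t2 - q * t2 /\ u t3 - q * t3 < u t2 - q * t2) ->
  H x q (u x) <= 0.
Proof.
  intros Hpk. apply H_le0_closed. intros d Hd.
  destruct (Hpk d Hd) as [t1 [t2 [t3 [Ht1 [Ht3 [V1 V3]]]]]].
  destruct (interior_loc_max (fun y => u y - parabola 0 q 0 0 y) t1 t3 t2)
    as [z [Hz Hmax]]; try (unfold parabola; lra).
  { intros c _. apply u_minus_parabola_continuity_pt. }
  apply visc_sub_parabola in Hmax.
  exists z, q. repeat split; [apply Rabs_def1; lra | rewrite Rminus_eq_0, Rabs_R0; lra |].
  replace q with (q + 2 * 0 * (z - 0)) at 1 by ring. exact Hmax.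
Qed.

Lemma H_ge0_of_valleys x q :
  (forall d, 0 < d -> exists t1 t2 t3, x - d < t1 < t2 /\ t2 < t3 < x + d /\
     u t2 - q * t2 < u t1 - q * t1 /\ u t2 - q * t2 < u t3 - q * t3) ->
  0 <= H x q (u x).
Proof.
  intros Hvl. apply H_ge0_closed. intros d Hd.
  destruct (Hvl d Hd) as [t1 [t2 [t3 [Ht1 [Ht3 [V1 V3]]]]]].
  destruct (interior_loc_min (fun y => u y - parabola 0 q 0 0 y) t1 t3 t2)
    as [z [Hz Hmin]]; try (unfold parabola; lra).
  { intros c _. apply u_minus_parabola_continuity_pt. }
  apply visc_super_parabola in Hmin.
  exists z, q. repeat split; [apply Rabs_def1; lra | rewrite Rminus_eq_0, Rabs_R0; lra |].
  replace q with (q + 2 * 0 * (z - 0)) at 1 by ring. exact Hmin.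
Qed.

Lemma oscillates_right_root x q : oscillates_right u x q -> H x q (u x) = 0.
Proof.
  intros Ho. apply Rle_antisym; [apply H_le0_of_peaks | apply H_ge0_of_valleys];
    intros d Hd.
  - destruct (proj2 (Ho d Hd)) as [y3 [Hy3 V3]].
    destruct (proj1 (Ho (y3 - x) ltac:(lra))) as [y2 [Hy2 V2]].
    destruct (proj2 (Ho (y2 - x) ltac:(lra))) as [y1 [Hy1 V1]].
    exists y1, y2, y3. repeat split; lra.
  - destruct (proj1 (Ho d Hd)) as [y3 [Hy3 V3]].
    destruct (proj2 (Ho (y3 - x) ltac:(lra))) as [y2 [Hy2 V2]].
    destruct (proj1 (Ho (y2 - x) ltac:(lra))) as [y1 [Hy1 V1]].
    exists y1, y2, y3. repeat split; lra.
Qed.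

Lemma oscillates_left_root x q : oscillates_left u x q -> H x q (u x) = 0.
Proof.
  intros Ho. apply Rle_antisym; [apply H_le0_of_peaks | apply H_ge0_of_valleys];
    intros d Hd.
  - destruct (proj2 (Ho d Hd)) as [y1 [Hy1 V1]].
    destruct (proj1 (Ho (x - y1) ltac:(lra))) as [y2 [Hy2 V2]].
    destruct (proj2 (Ho (x - y2) ltac:(lra))) as [y3 [Hy3 V3]].
    exists y1, y2, y3. repeat split; lra.
  - destruct (proj1 (Ho d Hd)) as [y1 [Hy1 V1]].
    destruct (proj2 (Ho (x - y1) ltac:(lra))) as [y2 [Hy2 V2]].
    destruct (proj1 (Ho (x - y2) ltac:(lra))) as [y3 [Hy3 V3]].
    exists y1, y2, y3. repeat split; lra.
Qed.

Lemma u_right_deriv_exists x : exists a, right_deriv u x a.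
Proof.
  destruct (u_loc_lipschitz x) as [L HL].
  apply (right_deriv_exists u x L (1 / 2)); [lra | |].
  - intros y Hy. apply HL; lra.
  - intros a e He Hosc.
    apply (convex_no_zero_interval (H_deriv_p x (u x)) (Hp_incr x (u x)) a e He).
    intros q Hq. apply oscillates_right_root, Hosc, Hq.
Qed.

Lemma u_left_deriv_exists x : exists b, left_deriv u x b.
Proof.
  destruct (u_loc_lipschitz x) as [L HL].
  apply (left_deriv_exists u x L (1 / 2)); [lra | |].
  - intros y Hy. rewrite Rabs_minus_sym. apply HL; lra.
  - intros b e He Hosc.
    apply (convex_no_zero_interval (H_deriv_p x (u x)) (Hp_incr x (u x)) b e He).
    intros q Hq. apply oscillates_left_root, Hosc, Hq.
Qed.

(* Subtracting the parabolas [s (t - c) +- (4 eta / h) (t - c)^2] from u forces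
   an interior extremum on [c - h, c + h], with slope within [8 eta] of [s]. *)
Lemma slopes_touching_affine_approx c h s eta : 0 < h -> 0 < eta ->
  (forall t, c - h <= t <= c + h -> Rabs (u t - u c - s * (t - c)) <= eta * h) ->
  (exists z q, Rabs (z - c) < h /\ Rabs (q - s) <= 8 * eta /\ 0 <= H z q (u z)) /\
  (exists z q, Rabs (z - c) < h /\ Rabs (q - s) <= 8 * eta /\ H z q (u z) <= 0).
Proof.
  intros Hh He Happ.
  set (K := 4 * eta / h).
  assert (HK : 0 < K) by (unfold K; apply Rdiv_lt_0_compat; lra).
  assert (HKh : K * h = 4 * eta) by (unfold K; field; lra).
  pose proof (Rabs_le_bounds _ _ (Happ (c - h) ltac:(lra))) as B1.
  pose proof (Rabs_le_bounds _ _ (Happ (c + h) ltac:(lra))) as B2.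
  replace (c - h - c) with (- h) in B1 by ring. replace (c + h - c) with h in B2 by ring.
  assert (Hslope : forall z K', Rabs K' = K -> Rabs (z - c) <= h ->
            Rabs (s + 2 * K' * (z - c) - s) <= 8 * eta).
  { intros z K' HK' Hz. replace (s + 2 * K' * (z - c) - s) with (2 * K' * (z - c)) by ring.
    rewrite !Rabs_mult, HK', Rabs_right by lra.
    pose proof (Rabs_pos (z - c)). nra. }
  split.
  - destruct (interior_loc_min (fun y => u y - parabola (u c) s c (- K) y) (c - h) (c + h) c)
      as [z [Hz Hmin]]; try (unfold parabola; nra).
    { intros t _. apply u_minus_parabola_continuity_pt. }
    apply visc_super_parabola in Hmin.
    exists z, (s + 2 * - K * (z - c)). repeat split; [apply Rabs_def1; lra | | exact Hmin].
    apply Hslope; [rewrite Rabs_Ropp, Rabs_right; lra | apply Rabs_le; lra].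
  - destruct (interior_loc_max (fun y => u y - parabola (u c) s c K y) (c - h) (c + h) c)
      as [z [Hz Hmax]]; try (unfold parabola; nra).
    { intros t _. apply u_minus_parabola_continuity_pt. }
    apply visc_sub_parabola in Hmax.
    exists z, (s + 2 * K * (z - c)). repeat split; [apply Rabs_def1; lra | | exact Hmax].
    apply Hslope; [rewrite Rabs_right; lra | apply Rabs_le; lra].
Qed.

Lemma root_of_affine_approx x a :
  (forall d, 0 < d -> exists c h, 0 < h /\ Rabs (c - x) + h < d /\
     forall t, c - h <= t <= c + h -> Rabs (u t - u c - a * (t - c)) <= d / 16 * h) ->
  H x a (u x) = 0.
Proof.
  intros Happ.
  assert (Hnear : forall d c z, Rabs (z - c) < d - Rabs (c - x) -> Rabs (z - x) < d).
  { intros d c z Hz. replace (z - x) with ((z - c) + (c - x)) by ring.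
    eapply Rle_lt_trans; [apply Rabs_triang | lra]. }
  apply Rle_antisym; [apply H_le0_closed | apply H_ge0_closed]; intros d Hd;
    destruct (Happ d Hd) as [c [h [Hh [Hc Hb]]]].
  - destruct (proj2 (slopes_touching_affine_approx c h a (d / 16) Hh ltac:(lra) Hb))
      as [z [q [Hz [Hq Hv]]]].
    exists z, q. repeat split; [apply (Hnear d c); lra | lra | exact Hv].
  - destruct (proj1 (slopes_touching_affine_approx c h a (d / 16) Hh ltac:(lra) Hb))
      as [z [q [Hz [Hq Hv]]]].
    exists z, q. repeat split; [apply (Hnear d c); lra | lra | exact Hv].
Qed.

Lemma right_deriv_root x a : right_deriv u x a -> H x a (u x) = 0.
Proof.
  intros Hd. apply root_of_affine_approx. intros d Hd0.
  destruct (right_deriv_affine_approx u x a Hd (d / 2) (d / 16)) as [h [Hh Happ]]; [lra | lra |].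
  exists (x + h), h. repeat split; [lra | |].
  - replace (x + h - x) with h by ring. rewrite Rabs_right; lra.
  - intros t Ht. apply Happ. lra.
Qed.

Lemma left_deriv_root x b : left_deriv u x b -> H x b (u x) = 0.
Proof.
  intros Hd. apply root_of_affine_approx. intros d Hd0.
  destruct (left_deriv_affine_approx u x b Hd (d / 2) (d / 16)) as [h [Hh Happ]]; [lra | lra |].
  exists (x - h), h. repeat split; [lra | |].
  - replace (x - h - x) with (- h) by ring. rewrite Rabs_Ropp, Rabs_right; lra.
  - intros t Ht. apply Happ. lra.
Qed.

(* A convex kink would make [u] touch from below a line whose slope lies strictly
   between two roots of the strictly convex [H x . (u x)], where [H] is negative. *)
Lemma one_sided_derivs_ordered x a b : right_deriv u x a -> left_deriv u x b -> a <= b.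
Proof.
  intros Hr Hl. apply Rnot_lt_le. intros Hlt.
  set (p := (a + b) / 2).
  assert (Hge : 0 <= H x p (u x)).
  { destruct (Hr ((a - b) / 2) ltac:(lra)) as [r1 [Hr1 Hr1']].
    destruct (Hl ((a - b) / 2) ltac:(lra)) as [r2 [Hr2 Hr2']].
    replace p with (p + 2 * 0 * (x - x)) by ring.
    apply (visc_super_parabola (u x) p x 0 x).
    exists (Rmin r1 r2). split; [apply Rmin_pos; auto|].
    intros y Hy. pose proof (Rmin_l r1 r2). pose proof (Rmin_r r1 r2).
    apply Rabs_def2 in Hy. unfold parabola.
    destruct (Rtotal_order y x) as [Hyx|[->|Hyx]]; [| lra |].
    - pose proof (Rabs_le_bounds _ _ (Hr2' y ltac:(lra))). unfold p. nra.
    - pose proof (Rabs_le_bounds _ _ (Hr1' y ltac:(lra))). unfold p. nra. }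
  pose proof (convex_lt_max (H_deriv_p x (u x)) (Hp_incr x (u x)) b a p ltac:(unfold p; lra)) as K.
  cbv beta in K. rewrite (right_deriv_root x a Hr), (left_deriv_root x b Hl), Rmax_left in K; lra.
Qed.

Lemma one_sided_derivs_cases x a b : right_deriv u x a -> left_deriv u x b ->
  a = b \/ (a < b /\ Hp H x a (u x) < 0 /\ 0 < Hp H x b (u x)).
Proof.
  intros Hr Hl. destruct (one_sided_derivs_ordered x a b Hr Hl) as [Hlt|]; [right | left; auto].
  split; [exact Hlt|].
  apply (convex_two_roots (H_deriv_p x (u x)) (Hp_incr x (u x)));
    [apply right_deriv_root | apply left_deriv_root |]; auto.
Qed.

Lemma Hp_left_deriv_nonzero x b : left_deriv u x b -> Hp H x b (u x) <> 0.
Proof.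
  intros Hl. destruct (u_right_deriv_exists x) as [a Hr].
  destruct (one_sided_derivs_cases x a b Hr Hl) as [<-|[_ [_ Hpos]]]; [| lra].
  pose proof (right_left_deriv_is_derive u x a Hr Hl) as D.
  rewrite <- (is_derive_unique _ _ _ D). apply B_nonzero. eexists; exact D.
Qed.

Definition neg_slopes (z : R) : Prop := forall a b, right_deriv u z a -> left_deriv u z b ->
  Hp H z a (u z) < 0 /\ Hp H z b (u z) < 0.

Definition pos_slopes (z : R) : Prop := forall a b, right_deriv u z a -> left_deriv u z b ->
  0 < Hp H z a (u z) /\ 0 < Hp H z b (u z).

(* Where [H z m (u z) < 0], the supersolution property forbids interior minima of
   [u y - m y]. *)
Lemma no_valley m lo hi t1 t2 : lo <= t1 <= hi -> lo <= t2 <= hi ->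
  u t1 - m * t1 < u lo - m * lo -> u t2 - m * t2 < u hi - m * hi ->
  ~ (forall z, lo < z < hi -> H z m (u z) < 0).
Proof.
  intros Ht1 Ht2 V1 V2 Hneg.
  set (v := fun y => u y - parabola 0 m 0 0 y).
  assert (Hv : forall y, v y = u y - m * y) by (intros y; unfold v, parabola; ring).
  assert (Ht : exists t, lo <= t <= hi /\ v t < v lo /\ v t < v hi).
  { destruct (Rle_or_lt (v t1) (v t2)); [exists t1 | exists t2]; rewrite !Hv in *;
      repeat split; lra. }
  destruct Ht as [t [Ht [A B]]].
  destruct (interior_loc_min v lo hi t) as [z [Hz Hmin]]; auto.
  { intros c _. apply u_minus_parabola_continuity_pt. }
  apply visc_super_parabola in Hmin.
  replace (m + 2 * 0 * (z - 0)) with m in Hmin by ring.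
  specialize (Hneg z Hz). lra.
Qed.

(* If [H x . (u x)] decreases at the right slope [a], the line of slope [m] slightly
   above [a] has [H < 0] nearby; [no_valley] keeps every one-sided slope to the right
   of [x] below [m], hence on the decreasing branch. *)
Lemma neg_slopes_right x a : right_deriv u x a -> Hp H x a (u x) < 0 ->
  exists r, 0 < r /\ forall z, x < z < x + r -> neg_slopes z.
Proof.
  intros Ha Hneg.
  destruct (convex_root_sign_change (H_deriv_p x (u x)) a
              (right_deriv_root x a Ha) ltac:(lra) 1 ltac:(lra)) as [e [He [Hm _]]].
  set (m := a + e).
  destruct (cont_at_neg _ _ (H_along_u_cont_at m x)) as [r [Hr Hr']]; [unfold m; nra|].
  exists r; split; auto. intros z Hz a' b' Ha' Hb'.
  assert (Hneg' : forall t, x < t < x + r -> H t m (u t) < 0)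
    by (intros t Ht; apply Hr', Rabs_def1; lra).
  destruct (right_deriv_below u x a m Ha ltac:(unfold m; lra) (z - x) ltac:(lra))
    as [y0 [Hy0 V0]].
  assert (Ha'm : a' <= m).
  { apply Rnot_lt_le. intros Hlt.
    destruct (right_deriv_above u z a' m Ha' Hlt (x + r - z) ltac:(lra)) as [y [Hy V]].
    apply (no_valley m x y y0 z); try lra. intros t Ht. apply Hneg'. lra. }
  assert (Hb'm : b' <= m).
  { apply Rnot_lt_le. intros Hlt.
    destruct (left_deriv_above u z b' m Hb' Hlt (z - x) ltac:(lra)) as [y [Hy V]].
    apply (no_valley m x z y0 y); try lra. intros t Ht. apply Hneg'. lra. }
  split; apply (convex_root_below_neg (H_deriv_p z (u z)) (Hp_incr z (u z)) _ m);
    auto using right_deriv_root, left_deriv_root; apply Hneg'; lra.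
Qed.

Lemma pos_slopes_left x b : left_deriv u x b -> 0 < Hp H x b (u x) ->
  exists r, 0 < r /\ forall z, x - r < z < x -> pos_slopes z.
Proof.
  intros Hb Hpos.
  destruct (convex_root_sign_change (H_deriv_p x (u x)) b
              (left_deriv_root x b Hb) ltac:(lra) 1 ltac:(lra)) as [e [He [_ Hm]]].
  set (m := b - e).
  destruct (cont_at_neg _ _ (H_along_u_cont_at m x)) as [r [Hr Hr']]; [unfold m; nra|].
  exists r; split; auto. intros z Hz a' b' Ha' Hb'.
  assert (Hneg' : forall t, x - r < t < x -> H t m (u t) < 0)
    by (intros t Ht; apply Hr', Rabs_def1; lra).
  destruct (left_deriv_above u x b m Hb ltac:(unfold m; lra) (x - z) ltac:(lra))
    as [y0 [Hy0 V0]].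
  assert (Hb'm : m <= b').
  { apply Rnot_lt_le. intros Hlt.
    destruct (left_deriv_below u z b' m Hb' Hlt (z - (x - r)) ltac:(lra)) as [y [Hy V]].
    apply (no_valley m y x z y0); try lra. intros t Ht. apply Hneg'. lra. }
  assert (Ha'm : m <= a').
  { apply Rnot_lt_le. intros Hlt.
    destruct (right_deriv_below u z a' m Ha' Hlt (x - z) ltac:(lra)) as [y [Hy V]].
    apply (no_valley m z x y y0); try lra. intros t Ht. apply Hneg'. lra. }
  split; apply (convex_root_above_neg (H_deriv_p z (u z)) (Hp_incr z (u z)) _ m);
    auto using right_deriv_root, left_deriv_root; apply Hneg'; lra.
Qed.

Lemma neg_slopes_on_period x0 a : right_deriv u x0 a -> Hp H x0 a (u x0) < 0 ->
  forall z, x0 < z <= x0 + 1 -> neg_slopes z.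
Proof.
  intros Ha Hneg. apply right_induction; [exact (neg_slopes_right x0 a Ha Hneg) | |].
  - intros t Ht Hbelow.
    destruct (u_right_deriv_exists t) as [aT HaT]. destruct (u_left_deriv_exists t) as [bT HbT].
    assert (HbT_neg : Hp H t bT (u t) < 0).
    { apply Rnot_le_lt. intros Hle.
      destruct (pos_slopes_left t bT HbT) as [r [Hr Hr']].
      { pose proof (Hp_left_deriv_nonzero t bT HbT). lra. }
      set (z := t - Rmin r (t - x0) / 2).
      assert (0 < Rmin r (t - x0)) by (apply Rmin_pos; lra).
      pose proof (Rmin_l r (t - x0)). pose proof (Rmin_r r (t - x0)).
      destruct (u_right_deriv_exists z) as [az Haz]. destruct (u_left_deriv_exists z) as [bz Hbz].
      destruct (Hr' z ltac:(unfold z; lra) az bz Haz Hbz) as [Hpos _].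
      destruct (Hbelow z ltac:(unfold z; lra) az bz Haz Hbz) as [Hneg' _]. lra. }
    destruct (one_sided_derivs_cases t aT bT HaT HbT) as [<-|[_ [_ Hpos]]]; [| lra].
    intros a' b' Ha' Hb'.
    rewrite <- (right_deriv_unique _ _ _ _ HaT Ha'), <- (left_deriv_unique _ _ _ _ HbT Hb').
    auto.
  - intros t Ht Pt.
    destruct (u_right_deriv_exists t) as [aT HaT]. destruct (u_left_deriv_exists t) as [bT HbT].
    exact (neg_slopes_right t aT HaT (proj1 (Pt aT bT HaT HbT))).
Qed.

(* At a concave kink the right slope lies on the decreasing branch; propagating this
   over a full period contradicts periodicity, since the left slope is increasing. *)
Lemma u_no_kink x a b : right_deriv u x a -> left_deriv u x b -> a = b.
Proof.
  intros Ha Hb. destruct (one_sided_derivs_cases x a b Ha Hb) as [|[_ [Hneg Hpos]]]; auto.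
  exfalso.
  destruct (neg_slopes_on_period x a Ha Hneg (x + 1) ltac:(lra) a b
              (right_deriv_shift1 _ _ _ u_periodic Ha)
              (left_deriv_shift1 _ _ _ u_periodic Hb)) as [_ K].
  rewrite Hp_periodic, u_periodic in K. lra.
Qed.

Lemma u_one_sided_derivs x : right_deriv u x (Derive u x) /\ left_deriv u x (Derive u x).
Proof.
  destruct (u_right_deriv_exists x) as [a Ha]. destruct (u_left_deriv_exists x) as [b Hb].
  destruct (u_no_kink x a b Ha Hb).
  rewrite (is_derive_unique _ _ _ (right_left_deriv_is_derive u x a Ha Hb)). auto.
Qed.

Lemma u_is_derive x : is_derive u x (Derive u x).
Proof. apply right_left_deriv_is_derive; apply u_one_sided_derivs. Qed.

Lemma u_root x : H x (Derive u x) (u x) = 0.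
Proof. apply right_deriv_root, u_one_sided_derivs. Qed.

Lemma Bf_nonzero x : Bf H u x <> 0.
Proof. apply B_nonzero. eexists. apply u_is_derive. Qed.

Lemma Bf_periodic x : Bf H u (x + 1) = Bf H u x.
Proof.
  unfold Bf. rewrite Hp_periodic, u_periodic.
  rewrite (right_deriv_unique u (x + 1) (Derive u (x + 1)) (Derive u x)); auto.
  - apply u_one_sided_derivs.
  - apply right_deriv_shift1; [exact u_periodic | apply u_one_sided_derivs].
Qed.

Lemma Bf_neg_on_period x0 : Bf H u x0 < 0 -> forall z, x0 < z <= x0 + 1 -> Bf H u z < 0.
Proof.
  intros Hn z Hz. destruct (u_one_sided_derivs x0) as [Hr0 _].
  destruct (u_one_sided_derivs z) as [Hr Hl].
  exact (proj1 (neg_slopes_on_period x0 _ Hr0 Hn z Hz _ _ Hr Hl)).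
Qed.

Lemma Bf_sign_near x : forall z, Rabs (z - x) < 1 / 2 -> Bf H u z * Bf H u x > 0.
Proof.
  assert (Hsign : (forall z, x - 1/2 < z < x + 1/2 -> Bf H u z < 0) \/
                  (forall z, x - 1/2 < z < x + 1/2 -> 0 < Bf H u z)).
  { destruct (Rlt_or_le (Bf H u (x - 1/2)) 0) as [Hn|Hp].
    - left. intros z Hz. apply (Bf_neg_on_period (x - 1/2)); auto. lra.
    - right. intros z Hz. apply Rnot_le_lt. intros Hle.
      assert (Hzn : Bf H u z < 0) by (pose proof (Bf_nonzero z); lra).
      assert (E : Bf H u (x + 1/2) = Bf H u (x - 1/2)).
      { rewrite <- (Bf_periodic (x - 1/2)). f_equal. lra. }
      pose proof (Bf_nonzero (x - 1/2)).
      pose proof (Bf_neg_on_period z Hzn (x + 1/2) ltac:(lra)). lra. }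
  intros z Hz. apply Rabs_def2 in Hz.
  destruct Hsign as [Hs|Hs]; pose proof (Hs x ltac:(lra)); pose proof (Hs z ltac:(lra)); nra.
Qed.

(* [Derive u z] is the root of [H z . (u z)] on the branch selected by the sign of [B],
   which is locally constant; that root depends continuously on [z]. *)
Lemma Derive_u_cont_at x : cont_at (Derive u) x.
Proof.
  intros e He. set (p := Derive u x).
  destruct (convex_root_sign_change (H_deriv_p x (u x)) p (u_root x)
              (Bf_nonzero x) e He) as [e' [He' [Hr Hl]]].
  destruct (cont_at_same_sign _ x _ (H_along_u_cont_at (p + e') x) Hr) as [d1 [Hd1 Hd1']].
  destruct (cont_at_same_sign _ x (- Bf H u x) (H_along_u_cont_at (p - e') x))
    as [d2 [Hd2 Hd2']]; [unfold Bf; fold p; lra|].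
  exists (Rmin (1 / 2) (Rmin d1 d2)). split; [repeat apply Rmin_pos; lra|].
  intros z Hz.
  pose proof (Rmin_l (1 / 2) (Rmin d1 d2)). pose proof (Rmin_r (1 / 2) (Rmin d1 d2)).
  pose proof (Rmin_l d1 d2). pose proof (Rmin_r d1 d2).
  pose proof (Hd2' z ltac:(lra)).
  destruct (convex_root_between (H_deriv_p z (u z)) (Hp_incr z (u z)) p e' (Derive u z)
              (Bf H u x) ltac:(lra) (Hd1' z ltac:(lra)) ltac:(lra) (u_root z)
              (Bf_sign_near x z ltac:(lra))).
  apply Rabs_def1; lra.
Qed.

(** * The perturbation [wf] *)

Definition rho_rate (t : R) : R := (muf H u - Hu H t (Derive u t) (u t)) / Bf H u t.

Lemma rho_rate_continuous x : continuous rho_rate x.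
Proof.
  apply continuity_pt_filterlim, continuity_pt_div.
  - apply continuity_pt_minus; [apply continuity_pt_const; intros ? ?; auto|].
    apply cont_at_continuity_pt.
    apply (cont3_comp_cont_at (Hu H) (fun s => s) (Derive u) u);
      auto using Hu_cont3, cont_at_id, Derive_u_cont_at, u_cont_at.
  - apply cont_at_continuity_pt.
    apply (cont3_comp_cont_at (Hp H) (fun s => s) (Derive u) u);
      auto using Hp_cont3, cont_at_id, Derive_u_cont_at, u_cont_at.
  - apply Bf_nonzero.
Qed.

Lemma rho_is_derive x : is_derive (rhof H u) x (rhof H u x * rho_rate x).
Proof.
  unfold rhof.
  change (fun t => (muf H u - Hu H t (Derive u t) (u t)) / Bf H u t) with rho_rate.
  auto_derive; [| rewrite Rmult_1_l, Rmult_comm; reflexivity].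
  split; [apply (@ex_RInt_continuous R_CompleteNormedModule); intros; apply rho_rate_continuous|].
  split; [| exact I].
  apply filter_forall. intros y. apply continuity_pt_filterlim, rho_rate_continuous.
Qed.

Lemma rho_deriv_mul_Bf x : rhof H u x * rho_rate x * Bf H u x =
  rhof H u x * (muf H u - Hu H x (Derive u x) (u x)).
Proof. unfold rho_rate. field. apply Bf_nonzero. Qed.

Lemma rho_bounds : exists rm M0 M1, 0 < rm /\ forall x, 0 <= x <= 1 ->
  rm <= rhof H u x <= M0 /\ Rabs (rhof H u x * rho_rate x) <= M1.
Proof.
  assert (Hrho : forall x, continuous (rhof H u) x)
    by (intros x; apply (@ex_derive_continuous R_AbsRing R_NormedModule);
        eexists; apply rho_is_derive).
  destruct (continuity_ab_min (rhof H u) 0 1) as [xm [Hxm _]]; [lra | |].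
  { intros c _. apply continuity_pt_filterlim, Hrho. }
  destruct (cont_at_bounded_on (rhof H u) 0 1) as [M0 HM0];
    [lra | intros; apply continuous_cont_at, Hrho |].
  destruct (cont_at_bounded_on (fun x => rhof H u x * rho_rate x) 0 1) as [M1 HM1]; [lra| |].
  { intros t. apply continuous_cont_at, (continuous_mult (rhof H u) rho_rate);
      [apply Hrho | apply rho_rate_continuous]. }
  exists (rhof H u xm), M0, M1. split; [apply exp_pos|].
  intros x Hx. repeat split; auto.
  pose proof (Rle_abs (rhof H u x)). pose proof (HM0 x Hx). lra.
Qed.

Definition graph_modulus (eta k x : R) : Prop :=
  forall q v, Rabs (q - Derive u x) <= k -> Rabs (v - u x) <= k ->
    Rabs (Hu H x q v - Hu H x (Derive u x) (u x)) <= eta /\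
    Rabs (Hp H x q v - Hp H x (Derive u x) (u x)) <= eta.

Lemma graph_modulus_uniform eta : 0 < eta ->
  exists k, 0 < k /\ forall x, 0 <= x <= 1 -> graph_modulus eta k x.
Proof.
  intros Heta.
  destruct (uniform_on_interval (fun k x => 0 < k /\ graph_modulus eta (/ k) x) 0 1)
    as [k Hk]; [lra | | |].
  - intros k k' x Hkk [Hk0 Hmod]. split; [lra|]. intros q v Hq Hv.
    assert (/ k' <= / k) by (apply Rinv_le_contravar; lra).
    apply Hmod; lra.
  - intros x1 _. set (p1 := Derive u x1). set (w1 := u x1).
    destruct (cont3_oscillation (Hu H) x1 p1 w1 eta Hu_cont3 Heta) as [d1 [Hd1 Hu1]].
    destruct (cont3_oscillation (Hp H) x1 p1 w1 eta Hp_cont3 Heta) as [d2 [Hd2 Hp2]].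
    set (d := Rmin d1 d2).
    assert (0 < d) by (apply Rmin_pos; auto).
    assert (d <= d1) by apply Rmin_l. assert (d <= d2) by apply Rmin_r.
    destruct (Derive_u_cont_at x1 (d / 2) ltac:(lra)) as [r1 [Hr1 Hr1']].
    destruct (u_cont_at x1 (d / 2) ltac:(lra)) as [r2 [Hr2 Hr2']].
    exists (2 / d), (Rmin d (Rmin r1 r2)). split; [repeat apply Rmin_pos; auto|].
    intros x Hx.
    pose proof (Rmin_l d (Rmin r1 r2)). pose proof (Rmin_r d (Rmin r1 r2)).
    pose proof (Rmin_l r1 r2). pose proof (Rmin_r r1 r2).
    specialize (Hr1' x ltac:(lra)). specialize (Hr2' x ltac:(lra)).
    split; [apply Rdiv_lt_0_compat; lra|].
    intros q v Hq Hv. replace (/ (2 / d)) with (d / 2) in Hq, Hv by (field; lra).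
    assert (Hq' : Rabs (q - p1) < d).
    { replace (q - p1) with ((q - Derive u x) + (Derive u x - p1)) by (unfold p1; ring).
      eapply Rle_lt_trans; [apply Rabs_triang | unfold p1 in *; lra]. }
    assert (Hv' : Rabs (v - w1) < d).
    { replace (v - w1) with ((v - u x) + (u x - w1)) by (unfold w1; ring).
      eapply Rle_lt_trans; [apply Rabs_triang | unfold w1 in *; lra]. }
    split; [apply Hu1 | apply Hp2]; unfold p1, w1 in *; lra.
  - exists (/ k). split; [apply Rinv_0_lt_compat, (Hk 0); lra|].
    intros x Hx. apply Hk, Hx.
Qed.

Lemma H_expansion x p w dp dw : exists c1 c2,
  Rabs (c1 - w) <= Rabs dw /\ Rabs (c2 - p) <= Rabs dp /\
  H x (p + dp) (w + dw) = H x p w + Hu H x (p + dp) c1 * dw + Hp H x c2 w * dp.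
Proof.
  destruct (MVT_abs _ _ w (w + dw) (H_deriv_u x (p + dp))) as [c1 [Hc1 E1]].
  destruct (MVT_abs _ _ p (p + dp) (H_deriv_p x w)) as [c2 [Hc2 E2]].
  replace (w + dw - w) with dw in * by ring. replace (p + dp - p) with dp in * by ring.
  exists c1, c2. repeat split; auto. lra.
Qed.

(* With [delta = eps exp(-Theta t)], the residual of [w_eps] is
   [delta rho (Theta - mu) + o(delta)] uniformly on [0, 1], because [rho' B = rho (mu - H_u)]
   cancels the first-order terms of [H] along [u]. *)
Lemma residual_factorization Th : muf H u < Th -> exists eps0, 0 < eps0 /\
  forall x, 0 <= x <= 1 -> forall dl, Rabs dl <= eps0 -> exists beta, 0 < beta /\
    Th * dl * rhof H u x
      + H x (Derive u x - dl * (rhof H u x * rho_rate x)) (u x - dl * rhof H u x)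
    = dl * beta.
Proof.
  intros Hth. set (mu := muf H u) in *.
  destruct rho_bounds as [rm [M0 [M1 [Hrm Hbnd]]]].
  destruct (Hbnd 0 ltac:(lra)) as [[Hrm0 HM0] HM1].
  assert (HM1pos : 0 <= M1) by (pose proof (Rabs_pos (rhof H u 0 * rho_rate 0)); lra).
  set (eta := (Th - mu) * rm / (2 * (M0 + M1))).
  assert (Heta : 0 < eta) by (unfold eta; apply Rdiv_lt_0_compat; nra).
  assert (Heta' : eta * (M0 + M1) = (Th - mu) * rm / 2) by (unfold eta; field; lra).
  destruct (graph_modulus_uniform eta Heta) as [k [Hk Hmod]].
  exists (k / (M0 + M1)). split; [apply Rdiv_lt_0_compat; lra|].
  intros x Hx dl Hdl.
  destruct (Hbnd x Hx) as [[Hr1 Hr2] Hr3].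
  set (p := Derive u x) in *. set (w := u x) in *. set (r := rhof H u x) in *.
  set (r' := r * rho_rate x) in *.
  assert (Hdlr : Rabs (- (dl * r)) <= k /\ Rabs (- (dl * r')) <= k).
  { rewrite !Rabs_Ropp, !Rabs_mult, (Rabs_right r) by lra.
    pose proof (Rabs_pos dl). pose proof (Rabs_pos r').
    apply Rmult_le_compat_r with (r := M0 + M1) in Hdl; [| lra].
    replace (k / (M0 + M1) * (M0 + M1)) with k in Hdl by (field; lra).
    split; nra. }
  destruct (H_expansion x p w (- (dl * r')) (- (dl * r))) as [c1 [c2 [Hc1 [Hc2 E]]]].
  destruct (Hmod x Hx (p + - (dl * r')) c1) as [Hu1 _].
  { change (Derive u x) with p. replace (p + - (dl * r') - p) with (- (dl * r')) by ring.
    lra. }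
  { change (u x) with w. lra. }
  destruct (Hmod x Hx c2 w) as [_ Hp2].
  { change (Derive u x) with p. lra. }
  { change (u x) with w. rewrite Rminus_eq_0, Rabs_R0. lra. }
  fold p w in Hu1, Hp2. apply Rabs_le_bounds in Hu1, Hp2.
  assert (Hrel : r' * Hp H x p w = r * (mu - Hu H x p w))
    by (pose proof (rho_deriv_mul_Bf x) as K; unfold Bf in K; exact K).
  exists (Th * r - r * Hu H x (p + - (dl * r')) c1 - r' * Hp H x c2 w). split.
  - apply Rabs_le_bounds in Hr3. nra.
  - replace (p - dl * r') with (p + - (dl * r')) by ring.
    replace (w - dl * r) with (w + - (dl * r)) by ring.
    rewrite E, (u_root x : H x p w = 0). ring.
Qed.

Lemma wf_Derive_x Th eps x t : Derive (fun y => wf H u Th eps y t) x =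
  Derive u x - eps * exp (- Th * t) * (rhof H u x * rho_rate x).
Proof.
  apply is_derive_unique. unfold wf. auto_derive.
  - split; [eexists; apply u_is_derive|]. split; [|auto]. eexists; apply rho_is_derive.
  - change (Derive (fun y => u y) x) with (Derive u x).
    change (Derive (fun y => rhof H u y) x) with (Derive (rhof H u) x).
    rewrite (is_derive_unique _ _ _ (rho_is_derive x)). ring.
Qed.

End ViscositySolution.

Lemma exp_time_bound eps0 eps Th t : 0 < eps0 -> 0 < Rabs eps -> Th < 0 ->
  t <= (ln eps0 - ln (Rabs eps)) / (- Th) -> Rabs eps * exp (- Th * t) <= eps0.
Proof.
  intros He0 He Hth Ht.
  assert (Hexp : - Th * t <= ln eps0 - ln (Rabs eps)).
  { apply Rmult_le_compat_l with (r := - Th) in Ht; [| lra].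
    replace (- Th * ((ln eps0 - ln (Rabs eps)) / - Th)) with (ln eps0 - ln (Rabs eps))
      in Ht by (field; lra).
    lra. }
  assert (Hle : exp (- Th * t) <= eps0 / Rabs eps).
  { unfold Rdiv. rewrite <- (exp_ln eps0), <- (exp_ln (Rabs eps)), <- exp_Ropp, <- exp_plus
      by auto.
    destruct Hexp as [Hlt|Heq];
      [left; apply exp_increasing; lra | right; rewrite Heq; f_equal; ring]. }
  apply Rmult_le_compat_l with (r := Rabs eps) in Hle; [| lra].
  replace (Rabs eps * (eps0 / Rabs eps)) with eps0 in Hle by (field; lra). exact Hle.
Qed.

Lemma wf_Derive_t H u Th eps x t :
  Derive (fun s => wf H u Th eps x s) t = Th * (eps * exp (- Th * t)) * rhof H u x.
Proof. apply is_derive_unique. unfold wf. auto_derive; [auto | ring]. Qed.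

Theorem lemma2p4 (H : R -> R -> R -> R) (u0 : R -> R) :
  smooth3 H -> periodic1_3 H ->
  (forall x p u, 0 < Hpp H x p u) ->
  superlinear H ->
  (exists kappa, 0 < kappa /\ forall x p u, Rabs (Hu H x p u) <= kappa) ->
  visc_sol H u0 ->
  (forall x, ex_derive u0 x -> Hp H x (Derive u0 x) (u0 x) <> 0) ->
  muf H u0 < 0 ->
  forall Theta, muf H u0 < Theta < 0 ->
  exists eps0, 0 < eps0 /\
    (forall eps, 0 < eps <= eps0 ->
       forall x t, 0 <= x <= 1 ->
         0 <= t <= (ln eps0 - ln (Rabs eps)) / (- Theta) ->
         0 <= Derive (fun s => wf H u0 Theta eps x s) t
              + H x (Derive (fun y => wf H u0 Theta eps y t) x)
                    (wf H u0 Theta eps x t)) /\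
    (forall eps, - eps0 <= eps < 0 ->
       forall x t, 0 <= x <= 1 ->
         0 <= t <= (ln eps0 - ln (Rabs eps)) / (- Theta) ->
         Derive (fun s => wf H u0 Theta eps x s) t
              + H x (Derive (fun y => wf H u0 Theta eps y t) x)
                    (wf H u0 Theta eps x t) <= 0).
Proof.
  intros Hsm Hper Hconv Hsl _ Husol HB _ Th [Hmu Hth].
  destruct (residual_factorization H u0 Hsm Hper Hconv Hsl Husol HB Th Hmu)
    as [eps0 [Heps0 Hres]].
  assert (Hfac : forall eps x t, eps <> 0 -> 0 <= x <= 1 ->
            t <= (ln eps0 - ln (Rabs eps)) / (- Th) -> exists beta, 0 < beta /\
            Derive (fun s => wf H u0 Th eps x s) t
              + H x (Derive (fun y => wf H u0 Th eps y t) x) (wf H u0 Th eps x t)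
            = eps * exp (- Th * t) * beta).
  { intros eps x t Heps Hx Ht.
    destruct (Hres x Hx (eps * exp (- Th * t))) as [beta [Hb E]].
    { rewrite Rabs_mult, (Rabs_right (exp _)) by (left; apply exp_pos).
      apply exp_time_bound; auto. apply Rabs_pos_lt, Heps. }
    exists beta. split; auto.
    rewrite wf_Derive_t, (wf_Derive_x H u0 Hsm Hper Hconv Hsl Husol HB), <- E.
    unfold wf. do 2 f_equal. ring. }
  exists eps0. split; [exact Heps0|].
  split; intros eps Heps x t Hx Ht;
    destruct (Hfac eps x t ltac:(lra) Hx ltac:(lra)) as [beta [Hb ->]];
    pose proof (Rmult_lt_0_compat _ _ (exp_pos (- Th * t)) Hb); nra.
Qed.
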